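(* For every $n$ and every $D\le n^{1/4}$, there exists an unweighted directed graph $G$ with $\Theta(n)$ vertices and diameter $D$ such that every subgraph $H$ of $G$ on the same vertex set with $\mathrm{diam}(H)<1.5\,\mathrm{diam}(G)-1$ contains $\Omega(n^{1.5})$ edges.
   Context: $\mathrm{diam}(G)=\max_{u,v}d_G(u,v)$ where $d_G(u,v)$ is the directed shortest-path distance. A subgraph of $G=(V,E)$ is a graph $(V,E')$ with $E'\subseteq E$. *)

From mathcomp Require Import all_boot.
Set Implicit Arguments. Unset Strict Implicit. Unset Printing Implicit Defensive.

Definition dist_le (T : finType) (e : rel T) (k : nat) (u v : T) : Prop :=
  exists p : seq T, [/\ path e u p, last u p = v & size p <= k].

Definition diam_is (T : finType) (e : rel T) (D : nat) : Prop :=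
  (forall u v : T, dist_le e D u v) /\
  (exists u v : T, forall k, dist_le e k u v -> D <= k).

(* diam(h) < 1.5 * D - 1, i.e. every pair is at distance k with k < 1.5 D - 1,
   equivalently 2k + 2 < 3D  (an infinite diameter is never below the bound) *)
Definition diam_lt_3half_minus1 (T : finType) (h : rel T) (D : nat) : Prop :=
  forall u v : T, exists k, 2 * k + 2 < 3 * D /\ dist_le h k u v.

Definition subgraph (T : finType) (h e : rel T) : Prop :=
  forall u v, h u v -> e u v.

Definition nedges (T : finType) (e : rel T) : nat :=
  #|[set p : T * T | e p.1 p.2]|.

From mathcomp Require Import all_boot zify.
Set Implicit Arguments. Unset Strict Implicit. Unset Printing Implicit Defensive.

(* Take m ~ n/D directed paths P_i of length L and m paths Q_j of length L',
   with L + L' = D - 3 and L' in {L, L+1}; add a bridge from the end of every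
   P_i to the start of every Q_j, an edge from every Q-vertex to a hub z, and
   an edge from z to the start of every P_i.  All distances are at most D, and
   D is attained from the start of Q_1 to the end of Q_2.  Without the bridge
   P_i -> Q_j, a walk from the start of P_i to the end of Q_j has to cross into
   another Q, go through the hub and traverse a whole P-path again, so it has
   length at least 2L + L' + 4 >= 1.5 D - 1.  Both lower bounds are certified
   by potentials that drop by at most one along each edge.  So a subgraph of diameter < 1.5 D - 1
   keeps all m^2 ~ n^2/D^2 >= n^1.5 bridges.  For D <= 2 no subgraph has
   diameter below 1.5 D - 1 <= D, so any graph of diameter D will do. *)

Section Walks.
Variables (T : finType) (e : rel T).

Lemma dist_le_refl u : dist_le e 0 u u.
Proof. by exists [::]. Qed.

Lemma dist_le_edge u v : e u v -> dist_le e 1 u v.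
Proof. by move=> euv; exists [:: v]; rewrite /= euv. Qed.

Lemma dist_le_trans a b u v w :
  dist_le e a u v -> dist_le e b v w -> dist_le e (a + b) u w.
Proof.
move=> [p [pp lp sp]] [q [pq lq sq]]; exists (p ++ q); split.
- by rewrite cat_path pp lp.
- by rewrite last_cat lp.
- by rewrite size_cat leq_add.
Qed.

Lemma dist_le_weaken a b u v : a <= b -> dist_le e a u v -> dist_le e b u v.
Proof. by move=> hab [p [pp lp sp]]; exists p; split => //; apply: leq_trans hab. Qed.

Lemma potential_dist_le (f : T -> nat) k u v :
  (forall x y, e x y -> f x <= (f y).+1) -> dist_le e k u v -> f u <= f v + k.
Proof.
move=> hf [p [pp <- sp]]; apply: leq_trans (leq_add (leqnn _) sp).
elim: p u pp {sp} => [|w p IH] u /=; first by rewrite addn0.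
by case/andP=> /hf euw /IH; lia.
Qed.

End Walks.

Lemma subgraph_dist_le (T : finType) (h e : rel T) k u v :
  subgraph h e -> dist_le h k u v -> dist_le e k u v.
Proof. by move=> he [p [pp lp sp]]; exists p; split => //; apply: sub_path pp. Qed.

Lemma dist_le_map (T T' : finType) (e : rel T) (e' : rel T') (f : T -> T') k u v :
  (forall x y, e x y -> e' (f x) (f y)) -> dist_le e k u v -> dist_le e' k (f u) (f v).
Proof.
move=> hf [p [pp lp sp]]; exists (map f p); split.
- by rewrite path_map; apply: sub_path pp => x y /hf.
- by rewrite last_map lp.
- by rewrite size_map.
Qed.

Lemma nedges_map (T T' : finType) (e : rel T) (e' : rel T') (f : T -> T') :
  injective f -> (forall x y, e x y -> e' (f x) (f y)) -> nedges e <= nedges e'.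
Proof.
move=> finj hf; rewrite /nedges.
have pinj : injective (fun p : T * T => (f p.1, f p.2)).
  by move=> [a b] [c d] /= [] /finj -> /finj ->.
rewrite -(card_imset _ pinj); apply/subset_leq_card/subsetP => q.
by case/imsetP=> p; rewrite !inE => /hf ep ->.
Qed.

Lemma diam_gt2_of_short_subgraph (T : finType) (G H : rel T) D :
  diam_is G D -> subgraph H G -> diam_lt_3half_minus1 H D -> 2 < D.
Proof.
move=> [_ [u [v far]]] HG short; have [k [hk hd]] := short u v.
by have := far k (subgraph_dist_le HG hd); lia.
Qed.

Section Relabel.
Variables (T : finType) (G : rel T).

Definition relabel : rel 'I_#|T| := fun x y => G (enum_val x) (enum_val y).

Lemma relabel_irreflexive : irreflexive G -> irreflexive relabel.
Proof. by move=> irr x; apply: irr. Qed.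

Lemma relabel_diam D : diam_is G D -> diam_is relabel D.
Proof.
move=> [near [u [v far]]]; split.
- move=> x y; rewrite -(enum_valK x) -(enum_valK y).
  by apply: dist_le_map (near _ _) => a b; rewrite /relabel !enum_rankK.
- exists (enum_rank u), (enum_rank v) => k hk; apply: far.
  by rewrite -(enum_rankK u) -(enum_rankK v); apply: dist_le_map hk.
Qed.

Lemma relabel_short_subgraph D (H' : rel 'I_#|T|) :
  subgraph H' relabel -> diam_lt_3half_minus1 H' D ->
  exists2 H : rel T, subgraph H G /\ diam_lt_3half_minus1 H D & nedges H <= nedges H'.
Proof.
move=> H'G short; exists (fun a b => H' (enum_rank a) (enum_rank b)); last first.
  exact: nedges_map (@enum_rank_inj T) _.
split; first by move=> a b /H'G; rewrite /relabel !enum_rankK.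
move=> a b; have [k [hk hd]] := short (enum_rank a) (enum_rank b); exists k; split => //.
by rewrite -(enum_rankK a) -(enum_rankK b); apply: dist_le_map hd => x y; rewrite !enum_valK.
Qed.

End Relabel.

Section BridgeGraph.
Variables (m L L' : nat).

Definition pq_vertex : finType := (('I_m * 'I_L.+1) + ('I_m * 'I_L'.+1) + unit)%type.

Definition pv (i : 'I_m) (s : nat) : pq_vertex := inl (inl (i, inord s)).
Definition qv (j : 'I_m) (s : nat) : pq_vertex := inl (inr (j, inord s)).
Definition hub : pq_vertex := inr tt.

Definition pq_graph : rel pq_vertex := fun u v =>
  match u, v with
  | inl (inl (i, s)), inl (inl (i', s')) => (i == i') && ((s : nat).+1 == s')
  | inl (inl (_, s)), inl (inr (_, s')) => ((s : nat) == L) && ((s' : nat) == 0)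
  | inl (inr (j, s)), inl (inr (j', s')) => (j == j') && ((s : nat).+1 == s')
  | inl (inr _), inr _ => true
  | inr _, inl (inl (_, s)) => (s : nat) == 0
  | _, _ => false
  end.

Variant pq_vertex_spec : pq_vertex -> Type :=
  | PqP i s of s <= L : pq_vertex_spec (pv i s)
  | PqQ j s of s <= L' : pq_vertex_spec (qv j s)
  | PqHub : pq_vertex_spec hub.

Lemma pq_vertexP u : pq_vertex_spec u.
Proof.
case: u => [[[i s]|[j s]]|[]]; last exact: PqHub.
- by rewrite -[s]inord_val; apply: PqP; rewrite -ltnS.
- by rewrite -[s]inord_val; apply: PqQ; rewrite -ltnS.
Qed.

Lemma card_pq_vertex : #|pq_vertex| = m * L.+1 + m * L'.+1 + 1.
Proof. by rewrite !card_sum !card_prod !card_ord card_unit. Qed.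

Lemma pq_graph_irreflexive : irreflexive pq_graph.
Proof. by move=> [[[i s]|[j s]]|[]] //=; rewrite eqxx /= ?eqn_leq ?ltnn ?andbF. Qed.

Lemma pv_walk i s t : s + t <= L -> dist_le pq_graph t (pv i s) (pv i (s + t)).
Proof.
elim: t => [|t IH] le_stL; first by rewrite addn0; apply: dist_le_refl.
rewrite -addn1; apply: dist_le_trans (IH _) (dist_le_edge _); first lia.
by rewrite /= eqxx /= !inordK; lia.
Qed.

Lemma qv_walk j s t : s + t <= L' -> dist_le pq_graph t (qv j s) (qv j (s + t)).
Proof.
elim: t => [|t IH] le_stL; first by rewrite addn0; apply: dist_le_refl.
rewrite -addn1; apply: dist_le_trans (IH _) (dist_le_edge _); first lia.
by rewrite /= eqxx /= !inordK; lia.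
Qed.

Lemma dist_pv_qv i j s s' : s <= L -> s' <= L' ->
  dist_le pq_graph (L - s + 1 + s') (pv i s) (qv j s').
Proof.
move=> le_sL le_s'L'.
have to_end := @pv_walk i s (L - s) ltac:(lia).
have from_start := @qv_walk j 0 s' le_s'L'; rewrite add0n in from_start.
apply: dist_le_trans from_start; apply: dist_le_trans to_end (dist_le_edge _).
by rewrite /= !inordK //; lia.
Qed.

Lemma dist_qv_hub j s : dist_le pq_graph 1 (qv j s) hub.
Proof. exact: dist_le_edge. Qed.

Lemma dist_hub_pv i s : s <= L -> dist_le pq_graph (1 + s) hub (pv i s).
Proof.
move=> le_sL; have walk := @pv_walk i 0 s le_sL; rewrite add0n in walk.
by apply: dist_le_trans _ walk; apply: dist_le_edge; rewrite /= inordK.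
Qed.

Lemma dist_hub v : dist_le pq_graph (L + L' + 2) hub v.
Proof.
case: (pq_vertexP v) => [i s le_sL | j s le_sL' |].
- by apply: dist_le_weaken (dist_hub_pv i le_sL); lia.
- have walk := dist_le_trans (dist_hub_pv j (leqnn L)) (dist_pv_qv j j (leqnn L) le_sL').
  by apply: dist_le_weaken walk; lia.
- by apply: dist_le_weaken (dist_le_refl _ _); lia.
Qed.

Hypothesis le_LL' : L <= L'.

Lemma pq_dist_le u v : dist_le pq_graph (L + L' + 3) u v.
Proof.
case: (pq_vertexP u) => [i s le_sL | j s _ |].
- have via_hub := dist_le_trans (dist_pv_qv i i le_sL (leq0n L')) (dist_qv_hub i 0).
  case: (pq_vertexP v) => [i' s' le_s'L | j' s' le_s'L' |].
  + by apply: dist_le_weaken (dist_le_trans via_hub (dist_hub_pv i' le_s'L)); lia.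
  + by apply: dist_le_weaken (dist_pv_qv i j' le_sL le_s'L'); lia.
  + by apply: dist_le_weaken via_hub; lia.
- by apply: dist_le_weaken (dist_le_trans (dist_qv_hub j s) (dist_hub v)); lia.
- by apply: dist_le_weaken (dist_hub v); lia.
Qed.

(* A lower bound on the distance to the end of Q_j0: in the whole graph for
   [i0 = None], and for [i0 = Some i] in any subgraph missing the bridge
   P_i -> Q_j0, where every vertex of P_i has to detour through the hub. *)
Definition pq_pot (i0 : option 'I_m) (j0 : 'I_m) (u : pq_vertex) : nat :=
  match u with
  | inl (inl (i, s)) => L - s + (if i0 == Some i then L + L' + 4 else L' + 1)
  | inl (inr (j, s)) => if j == j0 then L' - s else L + L' + 3
  | inr _ => L + L' + 2
  end.

Lemma pq_pot_edge i0 j0 u v : pq_graph u v ->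
  (if i0 is Some i then (u, v) != (pv i L, qv j0 0) else true) ->
  pq_pot i0 j0 u <= (pq_pot i0 j0 v).+1.
Proof.
case: u => [[[i s]|[j s]]|[]]; case: v => [[[i' s']|[j' s']]|[]] //=.
- by case/andP=> /eqP <- /eqP s's _; have := ltn_ord s'; case: ifP => _; lia.
- case/andP=> /eqP sL /eqP s'0 not_bridge.
  case: (i0 =P Some i) => [i0i | _]; last by case: ifP => _; lia.
  case: (j' =P j0) => [j'j0 | _]; last lia.
  move: not_bridge; rewrite i0i /pv /qv j'j0.
  have -> : s = inord L by apply: ord_inj; rewrite inordK.
  have -> : s' = inord 0 by apply: ord_inj; rewrite inordK.
  by rewrite eqxx.
- by case/andP=> /eqP <- /eqP s's _; have := ltn_ord s'; case: ifP => _; lia.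
- by move=> _ _; case: ifP => _; lia.
- by move=> /eqP s'0 _; case: ifP => _; lia.
Qed.

Lemma pq_far_pair j0 j1 k : j0 != j1 ->
  dist_le pq_graph k (qv j1 0) (qv j0 L') -> L + L' + 3 <= k.
Proof.
move=> j0j1 walk.
have pot_edge x y : pq_graph x y -> pq_pot None j0 x <= (pq_pot None j0 y).+1.
  by move=> xy; apply: pq_pot_edge.
have := potential_dist_le pot_edge walk.
by rewrite /= eq_sym (negbTE j0j1) eqxx inordK // subnn add0n.
Qed.

Lemma pq_graph_diam : 1 < m -> diam_is pq_graph (L + L' + 3).
Proof.
move=> m_gt1; split; first exact: pq_dist_le.
exists (qv (Ordinal m_gt1) 0), (qv (Ordinal (ltnW m_gt1)) L') => k.
by apply: pq_far_pair; rewrite -val_eqE.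
Qed.

Hypothesis le_L'L : L' <= L.+1.

Lemma short_subgraph_bridge (H : rel pq_vertex) :
  subgraph H pq_graph -> diam_lt_3half_minus1 H (L + L' + 3) ->
  forall i j, H (pv i L) (qv j 0).
Proof.
move=> HG short i j; apply/negPn/negP => no_bridge.
have [k [hk walk]] := short (pv i 0) (qv j L').
have pot_edge x y : H x y -> pq_pot (Some i) j x <= (pq_pot (Some i) j y).+1.
  move=> Hxy; apply: pq_pot_edge (HG _ _ Hxy) _.
  by apply/negP => /eqP [ex ey]; rewrite -ex -ey Hxy in no_bridge.
have := potential_dist_le pot_edge walk.
by rewrite /= !eqxx !inordK // subn0 subnn add0n; lia.
Qed.

Lemma short_subgraph_nedges (H : rel pq_vertex) :
  subgraph H pq_graph -> diam_lt_3half_minus1 H (L + L' + 3) -> m * m <= nedges H.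
Proof.
move=> HG short; pose bridge (ij : 'I_m * 'I_m) := (pv ij.1 L, qv ij.2 0).
have bridge_inj : injective bridge.
  by move=> [i j] [i' j'] [-> ->].
have <- : #|bridge @: [set: 'I_m * 'I_m]| = m * m.
  by rewrite card_imset // cardsT card_prod card_ord.
apply/subset_leq_card/subsetP => _ /imsetP[[i j] _ ->].
by rewrite inE; apply: short_subgraph_bridge.
Qed.

End BridgeGraph.

Arguments pq_graph : clear implicits.

Definition hard_instance (c1 c2 c3 n D : nat) : Prop :=
  exists (N : nat) (G : rel 'I_N),
    [/\ n <= c1 * N, N <= c2 * n, irreflexive G, diam_is G D &
        forall H : rel 'I_N, subgraph H G -> diam_lt_3half_minus1 H D ->
          n ^ 3 <= (c3 * nedges H) ^ 2].

Definition almost_complete (D n : nat) : rel 'I_n.+2 := fun u v =>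
  (u != v) && ~~ [&& D == 2, u == 0 :> nat & v == 1 :> nat].
Arguments almost_complete : clear implicits.

Lemma almost_complete_irreflexive D n : irreflexive (almost_complete D n).
Proof. by move=> u; rewrite /almost_complete eqxx. Qed.

Lemma almost_complete_diam D n : 0 < n -> 1 <= D <= 2 -> diam_is (almost_complete D n) D.
Proof.
move=> n_gt0 /andP[D_gt0 D_le2]; split.
- move=> u v; case: (u =P v) => [<- | neq_uv]; first exact: dist_le_weaken (dist_le_refl _ _).
  case missing: [&& D == 2, u == 0 :> nat & v == 1 :> nat]; last first.
    apply: dist_le_weaken (dist_le_edge _) => //.
    by rewrite /almost_complete missing andbT; apply/eqP.
  case/and3P: missing => /eqP D2 /eqP u0 /eqP v1.
  pose w : 'I_n.+2 := inord 2; have w2 : w = 2 :> nat by rewrite inordK // ltnS.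
  have neq_uw : u != w by rewrite -val_eqE /= u0 w2.
  have neq_wv : w != v by rewrite -val_eqE /= v1 w2.
  by exists [:: w; v]; rewrite /= /almost_complete neq_uw neq_wv u0 v1 w2 D2.
- have one : (inord 1 : 'I_n.+2) = 1 :> nat by rewrite inordK.
  exists ord0, (inord 1) => k [[|w [|w' p]] [walk /= last_p size_p]].
  + by move: one; rewrite -last_p.
  + move: walk; rewrite /= andbT /almost_complete last_p one => /andP[_ /negP not_missing].
    by case: (D =P 2) => [D2 | ]; [case: not_missing; rewrite D2 | move: size_p; lia].
  + by move: size_p => /=; lia.
Qed.

Lemma small_diameter_instance n D : 1 <= D <= 2 -> 1 <= n -> hard_instance 3 3 4 n D.
Proof.
move=> D12 n_gt0; exists n.+2, (almost_complete D n); split; first lia; first lia.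
- exact: almost_complete_irreflexive.
- exact: almost_complete_diam.
- move=> H HG short.
  have := diam_gt2_of_short_subgraph (almost_complete_diam n_gt0 D12) HG short.
  by move: D12; lia.
Qed.

Lemma quotient_bounds n D : 3 <= D -> D ^ 4 <= n ->
  [/\ D ^ 3 <= n %/ D, n < (n %/ D).+1 * D & n ^ 3 <= 16 * (n %/ D) ^ 4].
Proof.
move=> D_ge3 le_D4n; set q := n %/ D.
have lt_n : n < q.+1 * D.
  by rewrite {1}(divn_eq n D) mulSn addnC ltn_add2r ltn_pmod //; lia.
have le_D3q : D ^ 3 <= q.
  have : D ^ 3 * D < q.+1 * D by rewrite -expnSr; apply: leq_ltn_trans le_D4n lt_n.
  by rewrite ltn_pmul2r ?ltnS //; lia.
have q_gt0 : 0 < q by apply: leq_trans le_D3q; rewrite expn_gt0; lia.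
split => //.
have le_n : n <= 2 * q * D by apply/ltnW/(leq_trans lt_n); rewrite leq_pmul2r; lia.
have : n ^ 3 * n <= 16 * q ^ 4 * n.
  rewrite -expnSr; apply: (@leq_trans ((2 * q * D) ^ 4)); first by rewrite leq_exp2r.
  by rewrite !expnMn leq_mul.
by rewrite leq_pmul2r //; apply: leq_trans le_D4n; rewrite expn_gt0; lia.
Qed.

Lemma large_diameter_instance n D : 3 <= D -> D ^ 4 <= n -> hard_instance 3 3 4 n D.
Proof.
move=> D_ge3 le_D4n; have [le_D3m lt_n le_n3] := quotient_bounds D_ge3 le_D4n.
set m := n %/ D in le_D3m lt_n le_n3.
have le_mDn : m * D <= n by rewrite [X in _ <= X](divn_eq n D) leq_addr.
set L := (D - 3) %/ 2; set L' := D - 3 - L.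
have DLL' : L + L' + 3 = D by rewrite /L' /L; lia.
have le_LL' : L <= L' by rewrite /L' /L; lia.
have le_L'L : L' <= L.+1 by rewrite /L' /L; lia.
have m_gt0 : 0 < m by apply: leq_trans le_D3m; rewrite expn_gt0; lia.
have card : #|pq_vertex m L L'| = m * (D - 1) + 1.
  by rewrite card_pq_vertex -mulnDr; congr (m * _ + 1); lia.
exists #|pq_vertex m L L'|, (relabel (pq_graph m L L')); split.
- rewrite card mulnDr mulnA; nia.
- by rewrite card; nia.
- exact/relabel_irreflexive/pq_graph_irreflexive.
- by apply: relabel_diam; rewrite -DLL'; apply: pq_graph_diam; lia.
- move=> H' H'G short'; have [H [HG short] le_HH'] := relabel_short_subgraph H'G short'.
  rewrite -DLL' in short.
  have le_mm := leq_trans (short_subgraph_nedges le_LL' le_L'L HG short) le_HH'.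
  apply: leq_trans le_n3 _; rewrite expnMn; apply: leq_mul => //.
  by rewrite (expnM m 2 2) leq_exp2r // -mulnn.
Qed.

Theorem theorem1p1 :
  exists c1 c2 c3 : nat, [/\ 0 < c1, 0 < c2, 0 < c3 &
    forall n D : nat, 1 <= D -> D ^ 4 <= n ->
      exists (N : nat) (G : rel 'I_N),
        [/\ n <= c1 * N, N <= c2 * n, irreflexive G, diam_is G D &
            forall H : rel 'I_N, subgraph H G -> diam_lt_3half_minus1 H D ->
              n ^ 3 <= (c3 * nedges H) ^ 2]].
Proof.
exists 3, 3, 4; split => // n D D_gt0 le_D4n.
have n_gt0 : 0 < n by apply: leq_trans le_D4n; rewrite expn_gt0 D_gt0.
case: (leqP D 2) => [D_le2 | D_gt2].
- by apply: small_diameter_instance; rewrite ?D_gt0.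
- exact: large_diameter_instance.
Qed.
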